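(* Let $n\ge7$ and let $T$ be a tree on $n$ vertices with $\operatorname{diam}(\mathcal{C}_3(T))=\lfloor 3n/2\rfloor$. Then $T$ is either the star $K_{1,n-1}$ or a double star $S(a,b)$ with $a,b\ge1$, $a+b+2=n$ and $|a-b|\le4$.
   Context: The double star $S(a,b)$ is the tree obtained by joining the centers of the stars $K_{1,a}$ and $K_{1,b}$ by an edge. A proper 3-coloring of a tree $T=(V,E)$ is a map $f\colon V\to\mathbb{Z}/3\mathbb{Z}$ with $f(u)\neq f(v)$ for every edge $uv\in E$. The 3-coloring graph $\mathcal{C}_3(T)$ has the proper 3-colorings as vertices, two colorings adjacent iff they differ at exactly one vertex; $\operatorname{diam}$ denotes graph diameter. *)

From mathcomp Require Import all_boot all_algebra.
Set Implicit Arguments. Unset Strict Implicit. Unset Printing Implicit Defensive.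

Definition simple_graph (T : finType) (e : rel T) : Prop :=
  (forall x, ~~ e x x) /\ (forall x y, e x y = e y x).

Definition edge_set (T : finType) (e : rel T) : {set {set T}} :=
  [set [set x; y] | x in T, y in T & e x y].

Definition is_tree (T : finType) (e : rel T) : Prop :=
  simple_graph e /\ (forall x y, connect e x y) /\ #|edge_set e| = #|T| - 1.

Definition proper3 (T : finType) (e : rel T) (f : {ffun T -> 'Z_3}) : Prop :=
  forall u v, e u v -> f u != f v.

Definition col_adj (T : finType) (e : rel T) (f g : {ffun T -> 'Z_3}) : Prop :=
  proper3 e f /\ proper3 e g /\ #|[set v | f v != g v]| = 1.

Fixpoint walk (T : finType) (e : rel T) (k : nat) (f g : {ffun T -> 'Z_3}) : Prop :=
  match k with
  | 0 => f = g
  | k'.+1 => exists h, walk e k' f h /\ col_adj e h g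
  end.

Definition col_diam_eq (T : finType) (e : rel T) (d : nat) : Prop :=
  (forall f g, proper3 e f -> proper3 e g -> exists2 j, j <= d & walk e j f g) /\
  (exists f g, [/\ proper3 e f, proper3 e g & forall j, j < d -> ~ walk e j f g]).

Definition is_star (T : finType) (e : rel T) : Prop :=
  exists c : T, forall x y,
    e x y = ((x == c) && (y != c)) || ((y == c) && (x != c)).

(* T is (isomorphic to) the double star S(a,b): adjacent centers u, v; the a
   vertices with p true are the leaves at u, the b others are leaves at v. *)
Definition is_double_star (T : finType) (e : rel T) (a b : nat) : Prop :=
  exists (u v : T) (p : pred T),
    [/\ u != v,
        #|[set x | [&& x != u, x != v & p x]]| = a,
        #|[set x | [&& x != u, x != v & ~~ p x]]| = b &
        forall x y, e x y =
          [|| (x == u) && (y == v), (x == v) && (y == u),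
              (x == u) && [&& y != u, y != v & p y],
              (y == u) && [&& x != u, x != v & p x],
              (x == v) && [&& y != u, y != v & ~~ p y]
            | (y == v) && [&& x != u, x != v & ~~ p x]]].

From mathcomp Require Import all_boot all_order all_algebra.
From mathcomp Require Import zify.
Set Implicit Arguments. Unset Strict Implicit. Unset Printing Implicit Defensive.

(* A proper 3-colouring of a tree lifts to an integer height function that
   changes by 1 along edges, and a recolouring step moves a single height by
   2; so two colourings are at distance at least half the L1 distance of
   their heights, minimised over shifts by multiples of 3.  Call a vertex r
   light when \sum_v #{k in 1..3 | d(r,v) <= k} <= (3n + 1)/2: heights built
   from the distance to a light r give two colourings at distance more than
   3n/2.  An end leaf of a path of length 4 is light when n >= 7, and so is a
   leaf on the smaller side of a double star S(a,b) with |a - b| >= 5.  So a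
   tree reaching the bound has diameter at most 3: it is a star or a
   balanced double star. *)

Lemma set2_eq (T : finType) (a b c d : T) :
  [set a; b] = [set c; d] -> (a = c /\ b = d) \/ (a = d /\ b = c).
Proof.
move=> E.
have ha : a \in [set c; d] by rewrite -E !inE eqxx.
have hb : b \in [set c; d] by rewrite -E !inE eqxx orbT.
have hc : c \in [set a; b] by rewrite E !inE eqxx.
have hd : d \in [set a; b] by rewrite E !inE eqxx orbT.
move: ha hb hc hd; rewrite !inE.
case/orP=> /eqP ha; case/orP=> /eqP hb; subst a b.
- by move=> _ /orP [] /eqP hd; subst; left.
- by left.
- by right.
- by move=> /orP [] /eqP hc _; subst; left.
Qed.

Lemma leq_bool_impl (b c : bool) : (b -> c) -> b <= c.
Proof. by case: b; case: c => //= /(_ isT). Qed.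

Lemma leq_bool_or2 (b c1 c2 : bool) : (b -> c1 || c2) -> b <= c1 + c2.
Proof. by case: b; case: c1; case: c2 => //= /(_ isT). Qed.

Lemma leq_bool_or3 (b c1 c2 c3 : bool) : (b -> [|| c1, c2 | c3]) -> b <= c1 + c2 + c3.
Proof. by case: b; case: c1; case: c2; case: c3 => //= /(_ isT). Qed.

Lemma sum_eq1 (T : finType) (a : T) : \sum_(z : T) (z == a) = 1.
Proof. by rewrite (bigD1 a) //= eqxx big1 // => z /negbTE ->. Qed.

Lemma card_set_sum (T : finType) (P : pred T) : #|[set z | P z]| = \sum_z P z.
Proof. by rewrite -sum1dep_card big_mkcond; apply: eq_bigr => z _; case: (P z). Qed.

Section Tree.
Variables (T : finType) (e : rel T).
Hypothesis esym : forall x y, e x y = e y x.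
Hypothesis eirr : forall x, ~~ e x x.
Hypothesis econn : forall x y, connect e x y.

Fixpoint reach (k : nat) (r v : T) : bool :=
  if k is k'.+1 then reach k' r v || [exists w, reach k' r w && e w v] else r == v.

Lemma reach_edge k r w v : reach k r w -> e w v -> reach k.+1 r v.
Proof. by move=> rw wv /=; apply/orP; right; apply/existsP; exists w; rewrite rw. Qed.

Lemma reach_cat k1 k2 a b c : reach k1 a b -> reach k2 b c -> reach (k1 + k2) a c.
Proof.
move=> ab; elim: k2 c => [|k IH] c /=; first by move=> /eqP <-; rewrite addn0.
rewrite addnS => /orP [bc|/existsP [w /andP [bw wc]]]; last exact: reach_edge (IH _ bw) wc.
by rewrite /= IH.
Qed.

Lemma reach_sym k r v : reach k r v -> reach k v r.
Proof.
have edge a b : e a b -> reach 1 a b.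
  by move=> ab; apply: reach_edge ab; rewrite /= eqxx.
elim: k r v => [|k IH] r v /=; first by rewrite eq_sym.
move=> /orP [rv|/existsP [w /andP [rw wv]]]; first by rewrite IH.
by rewrite esym in wv; have := reach_cat (edge _ _ wv) (IH _ _ rw).
Qed.

Lemma reach_ex r v : exists k, reach k r v.
Proof.
have /connectP [p pth ->] := econn r v.
exists (size p); elim/last_ind: p pth => [|p x IH] //=.
rewrite rcons_path => /andP [h1 h2]; rewrite size_rcons last_rcons.
exact: reach_edge (IH h1) h2.
Qed.

Definition dist r v := ex_minn (reach_ex r v).

Lemma dist_reach r v : reach (dist r v) r v.
Proof. by rewrite /dist; case: ex_minnP. Qed.

Lemma dist_min k r v : reach k r v -> dist r v <= k.
Proof. by rewrite /dist; case: ex_minnP => m _ H /H. Qed.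

Lemma dist_eq0 r v : (dist r v == 0) = (r == v).
Proof.
apply/idP/idP => [/eqP d0|rv]; first by have := dist_reach r v; rewrite d0.
by rewrite -leqn0 dist_min.
Qed.

Lemma distxx r : dist r r = 0.
Proof. by apply/eqP; rewrite dist_eq0. Qed.

Lemma distC r v : dist r v = dist v r.
Proof. by apply/eqP; rewrite eqn_leq !dist_min // reach_sym // dist_reach. Qed.

Lemma dist_triangle a b c : dist a c <= dist a b + dist b c.
Proof. by apply: dist_min; apply: reach_cat; apply: dist_reach. Qed.

Lemma leq_dist_edge r w v : e w v -> dist r v <= (dist r w).+1.
Proof. by move=> wv; apply: dist_min; apply: reach_edge wv; apply: dist_reach. Qed.

Lemma dist_closer r v : r != v -> exists2 w, e w v & (dist r w).+1 = dist r v.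
Proof.
move=> rv; have := dist_reach r v.
case E: (dist r v) => [|k]; first by move/eqP: E; rewrite dist_eq0 (negbTE rv).
move=> /= /orP [rkv|/existsP [w /andP [rw wv]]]; first by have := dist_min rkv; rewrite E ltnn.
by exists w => //; have := dist_min rw; have := leq_dist_edge r wv; rewrite E; lia.
Qed.

Lemma dist_le1 r v : dist r v <= 1 -> (r == v) || e r v.
Proof.
case: (eqVneq r v) => //= rv d1; have [w wv] := dist_closer rv.
have -> : dist r v = 1 by move: d1; rewrite leq_eqVlt ltnS leqn0 dist_eq0 (negbTE rv) orbF => /eqP.
by move=> /eqP; rewrite eqSS dist_eq0 => /eqP ->.
Qed.

Lemma dist_adj r v : e r v -> dist r v = 1.
Proof.
move=> rv; apply/eqP; rewrite eqn_leq (leq_trans (leq_dist_edge r rv)) ?distxx //=.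
rewrite lt0n dist_eq0; apply: contraTneq rv => ->; exact: eirr.
Qed.

Hypothesis ecount : #|edge_set e| = #|T| - 1.

Lemma mem_edge_set x y : e x y -> [set x; y] \in edge_set e.
Proof. by move=> xy; apply/imset2P; exists x y => //; rewrite inE. Qed.

Definition parent r v := odflt v [pick w | e w v && (dist r w < dist r v)].

Lemma parent_spec r v : r != v -> e (parent r v) v /\ dist r (parent r v) < dist r v.
Proof.
move=> rv; rewrite /parent; case: pickP => [w /andP [wv lt]|none] //=.
have [w wv dw] := dist_closer rv.
by have := none w; rewrite wv -dw ltnSn.
Qed.

(* The n - 1 edges [v; parent r v], v != r, are distinct, so by the edge
   count they are all the edges of the tree. *)
Lemma parent_edges r : [set [set v; parent r v] | v in [set~ r]] = edge_set e.
Proof.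
apply/eqP; rewrite eqEcard; apply/andP; split.
  apply/subsetP => A /imsetP [v]; rewrite in_setC1 eq_sym => rv ->.
  by have [pv _] := parent_spec rv; rewrite setUC mem_edge_set.
rewrite ecount card_in_imset; first by rewrite cardsC1 subn1.
move=> v w; rewrite !in_setC1 => vr wr E.
have rv : r != v by rewrite eq_sym.
have rw : r != w by rewrite eq_sym.
case: (set2_eq E) => [[-> _]//|[vp wp]].
have [_ lv] := parent_spec rv; have [_ lw] := parent_spec rw.
by move: lv lw; rewrite wp -vp; lia.
Qed.

Lemma edge_parent r a b : e a b -> exists2 v, r != v & [set a; b] = [set v; parent r v].
Proof.
move=> ab; have := mem_edge_set ab; rewrite -(parent_edges r).
by case/imsetP => v; rewrite in_setC1 eq_sym; exists v.
Qed.

Lemma dist_edge_neq r a b : e a b -> dist r a != dist r b.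
Proof.
move=> ab; have [v rv E] := edge_parent r ab; have [_ lt] := parent_spec rv.
by case: (set2_eq E) => [[-> ->]|[-> ->]]; rewrite neq_ltn lt ?orbT.
Qed.

Lemma dist_edge r a b : e a b -> dist r b = (dist r a).+1 \/ dist r a = (dist r b).+1.
Proof.
move=> ab; have := leq_dist_edge r ab; have := dist_edge_neq r ab.
by have := leq_dist_edge r (w := b) (v := a); rewrite esym => /(_ ab); lia.
Qed.

Lemma closer_neighbor_uniq r v w1 w2 : e w1 v -> e w2 v ->
  dist r w1 < dist r v -> dist r w2 < dist r v -> w1 = w2.
Proof.
suff to_parent w : e w v -> dist r w < dist r v -> w = parent r v.
  by move=> ? ? ? ?; rewrite (to_parent w1) // (to_parent w2).
move=> wv lt; have [u ru E] := edge_parent r wv; have [_ lt2] := parent_spec ru.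
case: (set2_eq E) => [[wu vp]|[wp vu]]; subst => //.
by move: (ltn_trans lt2 lt); rewrite ltnn.
Qed.


Lemma has_neighbor : 1 < #|T| -> forall v, exists w, e v w.
Proof.
move=> /card_gt1P [a [b [_ _ ab]]] v.
have [u uv] : exists u, u != v.
  by case: (eqVneq a v) => [<-|av]; [exists b; rewrite eq_sym|exists a].
by have [w wv _] := dist_closer uv; exists w; rewrite esym.
Qed.

Definition leaf x := [forall w1, forall w2, (e x w1 && e x w2) ==> (w1 == w2)].

Lemma leafP x w1 w2 : leaf x -> e x w1 -> e x w2 -> w1 = w2.
Proof.
by move=> /forallP /(_ w1) /forallP /(_ w2) /implyP lx xw1 xw2; apply/eqP/lx; rewrite xw1.
Qed.

Lemma nonleaf_farther r u : ~~ leaf u -> exists w, e u w /\ dist r w = (dist r u).+1.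
Proof.
move=> /forallPn [w1 /forallPn [w2]]; rewrite negb_imply => /andP [/andP [uw1 uw2] w12].
case: (dist_edge r uw1) => d1; first by exists w1.
case: (dist_edge r uw2) => d2; first by exists w2.
have w1u : e w1 u by rewrite esym.
have w2u : e w2 u by rewrite esym.
have := closer_neighbor_uniq (r := r) w1u w2u; rewrite {1}d1 d2 !ltnSn => /(_ isT isT) w1w2.
by rewrite w1w2 eqxx in w12.
Qed.

Lemma far_leaf r u : exists2 x, leaf x & dist r u <= dist r x.
Proof.
suff far k : forall u, #|[set v | dist r u < dist r v]| <= k ->
    exists2 x, leaf x & dist r u <= dist r x.
  exact: far _ _ (max_card _).
elim: k => [|k IH] {}u farther; have [lu|nlu] := boolP (leaf u); try by exists u.
  have [w [_ dw]] := nonleaf_farther r nlu.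
  have : w \in [set v | dist r u < dist r v] by rewrite inE dw.
  by move: farther; rewrite leqn0 => /eqP /cards0_eq ->; rewrite inE.
have [w [_ dw]] := nonleaf_farther r nlu.
have sub : [set v | dist r w < dist r v] \proper [set v | dist r u < dist r v].
  apply/properP; split; first by apply/subsetP => z; rewrite !inE dw => /ltnW.
  by exists w; rewrite inE ?dw ?ltnn.
have [x lx wx] := IH w (ltnSE (leq_trans (proper_card sub) farther)).
by exists x => //; rewrite (leq_trans _ wx) // dw.
Qed.

(* Every path out of a leaf passes through its neighbour. *)
Lemma leaf_dist x p : leaf x -> e x p -> forall m z, dist x z = m.+1 -> dist p z <= m.
Proof.
move=> lx xp; elim=> [|m IH] z xz_m; have xz : x != z by rewrite -dist_eq0 xz_m.
  have [w wz dw] := dist_closer xz.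
  move: dw; rewrite xz_m => /eqP; rewrite eqSS dist_eq0 => /eqP xw.
  by rewrite -xw in wz; rewrite (leafP lx wz xp) distxx.
have [w wz dw] := dist_closer xz; move: dw; rewrite xz_m => /eqP; rewrite eqSS => /eqP xw.
by have := IH _ xw; have := leq_dist_edge p wz; lia.
Qed.

Lemma leaf_dist_le x p k z : leaf x -> e x p -> 1 <= k -> dist x z <= k.+1 -> dist p z <= k.
Proof.
move=> lx xp k1 xz_k; case: (eqVneq x z) => [<-|xz]; first by rewrite distC dist_adj.
case E: (dist x z) xz_k => [|m]; first by move: E xz => /eqP; rewrite dist_eq0 => ->.
by have := leaf_dist lx xp E; lia.
Qed.

Lemma leaf_dist_le1 x p z : leaf x -> e x p -> dist x z <= 1 -> (z == x) || (z == p).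
Proof.
move=> lx xp xz1; case: (eqVneq x z) => [//|xz] /=.
case E: (dist x z) xz1 => [|m] m0; first by move: E xz => /eqP; rewrite dist_eq0 => ->.
have := leaf_dist lx xp E; rewrite (_ : m = 0); last by lia.
by rewrite leqn0 dist_eq0 eq_sym.
Qed.

(* For a light root, [far_colorings] builds two colourings at distance
   more than 3n/2. *)
Definition ball_weight r :=
  \sum_v ((dist r v <= 1) + (dist r v <= 2) + (dist r v <= 3)).

Definition light r := 2 * ball_weight r <= 3 * #|T| + 1.

Lemma ball_overlap_bound p q z : p != q -> 2 <= dist q p ->
  (dist p z <= 1) + (dist q z <= 2) <= 1 + (z == p) + (z == parent q p).
Proof.
move=> pq qp2; have [pz1|] := boolP (dist p z <= 1); last by lia.
have [qz2|] := boolP (dist q z <= 2); last by lia.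
case/orP: (dist_le1 pz1) => [/eqP <-|pz]; first by rewrite eqxx.
have [par_p lt_par] := parent_spec (r := q) (v := p) (ltac:(by rewrite eq_sym)).
have lt : dist q z < dist q p by move: (dist_edge_neq q pz) qz2 qp2; lia.
have zp : e z p by rewrite esym.
by rewrite (closer_neighbor_uniq zp par_p lt lt_par) eqxx; lia.
Qed.

Lemma ball_overlap_sum p q : p != q -> 2 <= dist q p ->
  \sum_z (dist p z <= 1) + \sum_z (dist q z <= 2) <= #|T| + 2.
Proof.
move=> pq qp2; rewrite -big_split /=.
apply: leq_trans (_ : _ <= \sum_z (1 + (z == p) + (z == parent q p))) _.
  by apply: leq_sum => z _; exact: ball_overlap_bound.
by rewrite !big_split /= sum1_card !sum_eq1 -addnA.
Qed.

Lemma leaf_ball_weight x p : leaf x -> e x p ->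
  ball_weight x <= 2 + \sum_z (dist p z <= 1) + \sum_z (dist p z <= 2).
Proof.
move=> lx xp.
suff : ball_weight x <= \sum_z (((z == x) + (z == p)) + (dist p z <= 1) + (dist p z <= 2)).
  by rewrite !big_split /= !sum_eq1.
apply: leq_sum => z _; apply: leq_add; first apply: leq_add.
- by apply: leq_bool_or2; exact: leaf_dist_le1.
- by apply: leq_bool_impl; exact: leaf_dist_le.
- by apply: leq_bool_impl; exact: leaf_dist_le.
Qed.

(* The balls of radius 1 around p and 2 around q (or vice versa), for the
   neighbours p, q of the two leaves, meet at most in p and parent q p, so
   ball_weight x + ball_weight y <= 2n + 8, which is <= 3n + 1 for n >= 7. *)
Lemma light_of_dist4 x y : 7 <= #|T| -> leaf x -> leaf y -> 4 <= dist x y -> exists r, light r.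
Proof.
move=> T_ge7 lx ly xy4.
have [p xp] := has_neighbor (ltac:(lia) : 1 < #|T|) x.
have [q yq] := has_neighbor (ltac:(lia) : 1 < #|T|) y.
have qp2 : 2 <= dist q p.
  have := dist_triangle x p y; have := dist_triangle p q y.
  by rewrite (distC q y) (distC p q) (dist_adj xp) (dist_adj yq); lia.
have pq2 : 2 <= dist p q by rewrite distC.
have pq : p != q by apply: contraTneq qp2 => ->; rewrite distxx.
have sum_pq := ball_overlap_sum pq qp2.
have sum_qp := ball_overlap_sum (ltac:(by rewrite eq_sym) : q != p) pq2.
have bx := leaf_ball_weight lx xp; have by_ := leaf_ball_weight ly yq.
case: (leqP (ball_weight x) (ball_weight y)) => wxy; [exists x|exists y]; rewrite /light; lia.
Qed.

Lemma star_of_dist_le2 : 1 < #|T| -> (forall u v, dist u v <= 2) -> is_star e.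
Proof.
move=> T_gt1 diam2; have /card_gt1P [v0 _] := T_gt1.
have [x lx _] := far_leaf v0 v0; have [c xc] := has_neighbor T_gt1 x.
have cz z : z != c -> e c z.
  move=> zc; case: (eqVneq z x) => [->|zx]; first by rewrite esym.
  case/orP: (dist_le1 (leaf_dist_le (k := 1) lx xc isT (diam2 x z))) => // /eqP cz.
  by rewrite cz eqxx in zc.
exists c => a b.
case: (eqVneq a c) => [->|ac]; case: (eqVneq b c) => [->|bc] /=; rewrite ?(negbTE (eirr c)) ?cz //.
  by rewrite esym cz.
by apply/negP => ab; have := dist_edge_neq c ab; rewrite !dist_adj ?cz.
Qed.

Lemma edge_dist1 r v : e r v = (dist r v == 1).
Proof.
apply/idP/idP => [rv|/eqP rv1]; first by rewrite dist_adj.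
case/orP: (dist_le1 (eq_leq rv1)) => // /eqP rv.
by move: rv1; rewrite rv distxx.
Qed.

Lemma diametral_leaves u v : exists x y, [/\ leaf x, leaf y & dist u v <= dist x y].
Proof.
have [x lx vx] := far_leaf v u; have [y ly xy] := far_leaf x v.
by exists x, y; split => //; rewrite distC (leq_trans vx) // distC.
Qed.

Definition double_star_centers u v :=
  [/\ e u v, forall z, z != u -> z != v -> e u z != e v z
    & forall z z', z != u -> z != v -> z' != u -> z' != v -> ~~ e z z'].

Lemma double_star_centersC u v : double_star_centers u v -> double_star_centers v u.
Proof.
case=> uv split_uv nonadj; split; first by rewrite esym.
  by move=> z zv zu; rewrite eq_sym split_uv.
by move=> z z' zv zu z'v z'u; apply: nonadj.
Qed.

Lemma center_edge x y u v : leaf x -> leaf y -> e x u -> e y v -> dist x y = 3 -> e u v.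
Proof.
move=> lx ly xu yv xy3.
have uy2 : dist u y = 2.
  have := leaf_dist_le (k := 2) (z := y) lx xu isT; have := dist_triangle x u y.
  by rewrite xy3 (dist_adj xu); lia.
have yu : y != u by apply/eqP => yu; move: uy2; rewrite yu distxx.
have [w wu yw] := dist_closer yu; move: yw; rewrite (distC y u) uy2 => -[yw1].
have /orP [/eqP yw|yw] := dist_le1 (eq_leq yw1); first by move: yw1; rewrite -yw distxx.
by rewrite -(leafP ly yw yv) esym.
Qed.

Lemma no_cross_edge u v z z' : e u v -> e u z -> e v z' -> ~~ e u z' ->
  z' != u -> z != v -> ~~ e z z'.
Proof.
move=> uv uz vz' uz' z'u zv; apply: contra zv => zz'.
have uz'2 : dist u z' = 2.
  have uz'1 : dist u z' != 1 by rewrite -edge_dist1.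
  have uz'0 : dist u z' != 0 by rewrite dist_eq0 eq_sym.
  by have := dist_triangle u v z'; rewrite (dist_adj uv) (dist_adj vz'); lia.
apply/eqP; apply: (closer_neighbor_uniq (r := u) zz' vz'); by rewrite uz'2 dist_adj.
Qed.

Lemma diam3_double_star_centers x y u v : leaf x -> leaf y -> e x u -> e y v ->
  dist x y = 3 -> (forall a b, dist a b <= 3) -> double_star_centers u v.
Proof.
move=> lx ly xu yv xy3 diam3; have uv := center_edge lx ly xu yv xy3.
have split_uv z : z != u -> z != v -> e u z != e v z.
  move=> zu zv; have uz2 := leaf_dist_le (k := 2) (z := z) lx xu isT (diam3 x z).
  have vz2 := leaf_dist_le (k := 2) (z := z) ly yv isT (diam3 y z).
  have uz0 : dist u z != 0 by rewrite dist_eq0 eq_sym.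
  have vz0 : dist v z != 0 by rewrite dist_eq0 eq_sym.
  have := dist_edge_neq z uv; rewrite (distC z u) (distC z v) !edge_dist1 => uvz.
  have [[-> ->]|[-> ->]] // : (dist u z = 1 /\ dist v z = 2) \/ (dist u z = 2 /\ dist v z = 1).
  by lia.
split => // z z' zu zv z'u z'v; apply/negP => zz'.
have := split_uv _ zu zv; have := split_uv _ z'u z'v.
case uz: (e u z); case uz': (e u z') => /=; rewrite ?negbK => vz' vz.
- by have := dist_edge_neq u zz'; rewrite !dist_adj.
- by move: zz'; apply/negP; apply: (no_cross_edge uv _ vz'); rewrite ?uz ?uz'.
- by rewrite esym in zz'; move: zz'; apply/negP; apply: (no_cross_edge uv _ vz); rewrite ?uz ?uz'.
- by have := dist_edge_neq v zz'; rewrite !dist_adj.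
Qed.

Section DoubleStar.
Variables u v : T.
Hypothesis centers : double_star_centers u v.

Definition leaves_at (c c' : T) := [set z | [&& z != c, z != c' & e c z]].

Lemma leaves_at_other : [set z | [&& z != u, z != v & ~~ e u z]] = leaves_at v u.
Proof.
case: centers => _ split_uv _; apply/setP => z; rewrite !inE.
have [zu|zu] := eqVneq z u; have [zv|zv] := eqVneq z v; rewrite ?andbF //=.
by move: (split_uv z zu zv); case: (e u z); case: (e v z).
Qed.

Lemma double_star_leaves : is_double_star e #|leaves_at u v| #|leaves_at v u|.
Proof.
case: centers => uv split_uv nonadj; have vu : v != u by apply: contraTneq uv => ->.
have u_v : u != v by rewrite eq_sym.
exists u, v, (e u); rewrite -leaves_at_other; split => // a b.
have ev z : z != u -> z != v -> e v z = ~~ e u z.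
  by move=> zu zv; move: (split_uv z zu zv); case: (e u z); case: (e v z).
have [-> | au] := eqVneq a u; have [-> | bu] := eqVneq b u;
  have [av | av] := eqVneq a v; have [bv | bv] := eqVneq b v;
  subst; rewrite ?eqxx ?(negbTE u_v) ?(negbTE vu) ?(negbTE (eirr _)) ?andbT ?andbF ?orbF ?orbT //=.
all: try by rewrite esym.
all: try by rewrite ev.
all: try by rewrite esym ev.
by apply/negbTE; apply: nonadj.
Qed.

Lemma card_double_star : #|T| = #|leaves_at u v| + #|leaves_at v u| + 2.
Proof.
have -> : #|T| = \sum_(z : T) 1 by rewrite sum1_card.
rewrite -leaves_at_other !card_set_sum.
have vu : v != u by case: centers => uv _ _; apply: contraTneq uv => ->.
rewrite (eq_bigr (fun z => (z == u) + (z == v) +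
  ([&& z != u, z != v & e u z] + [&& z != u, z != v & ~~ e u z]))).
  by rewrite !big_split /= !sum_eq1; lia.
move=> z _; have [-> | zu] := eqVneq z u; first by rewrite eq_sym (negbTE vu).
by have [-> | zv] := eqVneq z v => //=; case: (e u z).
Qed.

(* Every vertex is within distance 3 of a leaf x at u; within distance 2
   lie only u, v and the a leaves at u, within distance 1 only x and u.  So
   ball_weight x <= n + a + 4, and n = a + b + 2. *)
Lemma light_of_unbalanced x : leaf x -> e x u ->
  #|leaves_at u v| + 5 <= #|leaves_at v u| -> light x.
Proof.
move=> lx xu unbal.
have ball : ball_weight x <=
    \sum_z (((z == x) + (z == u)) + ((z == u) + (z == v) + (z \in leaves_at u v)) + 1).
  apply: leq_sum => z _; apply: leq_add; first apply: leq_add.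
  - by apply: leq_bool_or2; exact: leaf_dist_le1.
  - apply: leq_bool_or3 => xz2.
    have uz1 := leaf_dist_le (k := 1) lx xu isT xz2.
    case/orP: (dist_le1 uz1) => [/eqP ->|uz]; first by rewrite eqxx.
    have [-> | zv] := eqVneq z v; first by rewrite orbT.
    have [-> | zu] := eqVneq z u; first by [].
    by rewrite inE zu zv uz !orbT.
  - by case: (_ <= 3).
move: ball; rewrite !big_split /= !sum_eq1 sum1_card -card_set_sum.
rewrite (_ : [set z | z \in leaves_at u v] = leaves_at u v); last by apply/setP => z; rewrite inE.
by rewrite /light {1 2}card_double_star; lia.
Qed.

End DoubleStar.

Lemma balanced_double_star_of_diam3 u v : (forall r, ~~ light r) ->
  dist u v = 3 -> (forall a b, dist a b <= 3) ->
  exists a b, [/\ 1 <= a, 1 <= b, a + b + 2 = #|T|, a <= b + 4 & b <= a + 4]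
              /\ is_double_star e a b.
Proof.
move=> heavy uv3 diam3.
have [x [y [lx ly uvxy]]] := diametral_leaves u v.
have xy3 : dist x y = 3 by apply/eqP; rewrite eqn_leq diam3 -uv3.
have T_gt1 : 1 < #|T| by apply/card_gt1P; exists x, y; rewrite -dist_eq0 xy3.
have [p xp] := has_neighbor T_gt1 x; have [q yq] := has_neighbor T_gt1 y.
have centers := diam3_double_star_centers lx ly xp yq xy3 diam3.
have leaf_at a b c d : leaf a -> e a b -> e c d -> dist a c = 3 -> a \in leaves_at b d.
  move=> la ab cd ac3; rewrite inE esym ab andbT; apply/andP; split.
    by apply: contraTneq ab => ->; exact: eirr.
  by apply/eqP => ad; move: ac3; rewrite ad distC (dist_adj cd).
have x_at_p := leaf_at _ _ _ _ lx xp yq xy3.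
have y_at_q := leaf_at _ _ _ _ ly yq xp (etrans (distC y x) xy3).
have sizes := card_double_star centers.
exists #|leaves_at p q|, #|leaves_at q p|; split; last exact: double_star_leaves.
have a_gt0 : 0 < #|leaves_at p q| by apply/card_gt0P; exists x.
have b_gt0 : 0 < #|leaves_at q p| by apply/card_gt0P; exists y.
have b_le : #|leaves_at q p| <= #|leaves_at p q| + 4.
  by rewrite leqNgt; apply: contra (heavy x) => ?; apply: (light_of_unbalanced centers lx xp); lia.
have a_le : #|leaves_at p q| <= #|leaves_at q p| + 4.
  rewrite leqNgt; apply: contra (heavy y) => ?.
  by apply: (light_of_unbalanced (double_star_centersC centers) ly yq); lia.
by split; lia.
Qed.

End Tree.

Import Order.TTheory GRing.Theory Num.Theory.
Local Open Scope ring_scope.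

Definition mod3 (h : int) : 'Z_3 := inZp (absz (h %% 3)%Z).

Lemma val_mod3 h : (val (mod3 h) : int) = (h %% 3)%Z.
Proof. rewrite /mod3 /=; change (Zp_trunc 3).+2 with 3%N; lia. Qed.

Lemma eq_mod3 (x : 'Z_3) h : (x == mod3 h) = ((val x : int) == (h %% 3)%Z).
Proof. by rewrite -val_mod3; apply/eqP/eqP => [->|E] //; apply: val_inj; case: E. Qed.

Lemma mod3_inj_eq a b : (mod3 a == mod3 b) = ((a %% 3)%Z == (b %% 3)%Z).
Proof. by rewrite eq_mod3 val_mod3. Qed.

Lemma Z3_val_bound (x : 'Z_3) : 0 <= (val x : int) < 3.
Proof. by case: x => [[|[|[|m]]] //]. Qed.

Section HeightFunctions.
Variables (T : finType) (e : rel T).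
Hypothesis esym : forall x y, e x y = e y x.
Hypothesis eirr : forall x, ~~ e x x.
Hypothesis neighbor : forall v, exists w, e v w.

Definition height (f : {ffun T -> 'Z_3}) (H : T -> int) :=
  (forall v, f v = mod3 (H v)) /\ (forall u v, e u v -> `|H u - H v| = 1).

Lemma height_proper f H : height f H -> proper3 e f.
Proof. by move=> [fH H1] u v uv; rewrite !fH mod3_inj_eq; have := H1 _ _ uv; lia. Qed.

(* A recoloured vertex v0 has all its neighbours at one height h, and its
   two admissible colours are those of h - 1 and h + 1, so its height jumps
   by 2 (reflection through h). *)
Lemma height_col_adj f g H : col_adj e f g -> height f H ->
  exists H', [/\ height g H', \sum_v `|H' v - H v| = 2 & forall v, ((H' v - H v) %% 2)%Z = 0].
Proof.
case=> pf [pg /eqP/cards1P [v0 diff1]] [fH H1].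
have fg v : v != v0 -> f v = g v.
  move=> vv0; apply/eqP; apply: contraNT vv0 => nfg.
  have: v \in [set v | f v != g v] by rewrite inE.
  by rewrite diff1 inE.
have fgv0 : f v0 != g v0.
  have: v0 \in [set v | f v != g v] by rewrite diff1 set11.
  by rewrite inE.
have [w0 v0w0] := neighbor v0.
have w0v0 : w0 != v0 by apply: contraTneq v0w0 => ->; exact: eirr.
pose H' v := if v == v0 then 2 * H w0 - H v0 else H v.
have gv0 : (val (g v0) : int) = ((2 * H w0 - H v0) %% 3)%Z.
  have := Z3_val_bound (g v0); have := H1 _ _ v0w0.
  have := pg _ _ v0w0; rewrite -(fg _ w0v0) fH eq_mod3.
  by move: fgv0; rewrite fH eq_sym eq_mod3; lia.
have flat b : e v0 b -> H b = H w0.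
  move=> v0b; have bv0 : b != v0 by apply: contraTneq v0b => ->; exact: eirr.
  have := pg _ _ v0b; rewrite -(fg _ bv0) fH eq_mod3 gv0.
  by have := H1 _ _ v0b; have := H1 _ _ v0w0; lia.
exists H'; split.
- split=> [v|u v uv].
    case: (eqVneq v v0) => [->|vv0]; first by apply/eqP; rewrite /H' eqxx eq_mod3 gv0.
    by rewrite -fg // fH /H' (negbTE vv0).
  rewrite /H'; case: (eqVneq u v0) => [eu|nu]; case: (eqVneq v v0) => [ev|nv].
  + by move: uv; rewrite eu ev (negbTE (eirr v0)).
  + by rewrite -eu in flat; rewrite (flat _ uv); have := H1 _ _ v0w0; rewrite -eu; lia.
  + by rewrite esym ev in uv; rewrite (flat _ uv); have := H1 _ _ v0w0; lia.
  + exact: H1.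
- rewrite (bigD1 v0) //= big1 => [|v nv]; last by rewrite /H' (negbTE nv) subrr normr0.
  by rewrite /H' eqxx addr0; have := H1 _ _ v0w0; lia.
- by move=> v; rewrite /H'; case: (eqVneq v v0) => [->|nv] /=; lia.
Qed.

Lemma height_walk k f g H0 : walk e k f g -> height f H0 ->
  exists H, [/\ height g H, \sum_v `|H v - H0 v| <= 2 * k%:Z
                          & forall v, ((H v - H0 v) %% 2)%Z = 0].
Proof.
elim: k g => [|k IH] g /=.
  move=> -> fH0; exists H0; split => //; last by move=> v; rewrite subrr.
  by rewrite big1 // => v _; rewrite subrr normr0.
move=> [h [wk adj]] fH0; have [H1 [hH1 s1 p1]] := IH _ wk fH0.
have [H2 [gH2 s2 p2]] := height_col_adj adj hH1.
exists H2; split => //; last by move=> v; have := p1 v; have := p2 v; lia.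
apply: le_trans (_ : \sum_v (`|H2 v - H1 v| + `|H1 v - H0 v|) <= _).
  apply: ler_sum => v _; rewrite (_ : H2 v - H0 v = (H2 v - H1 v) + (H1 v - H0 v)); last by lia.
  exact: ler_normD.
by rewrite big_split /= s2; apply: (le_trans (lerD (lexx 2) s1)); lia.
Qed.

Hypothesis econn : forall x y, connect e x y.

Lemma height_uniq g H1 H2 : height g H1 -> height g H2 -> exists c, forall v, H1 v = H2 v + 3 * c.
Proof.
move=> [gH1 e1] [gH2 e2].
have m3 v : ((H1 v - H2 v) %% 3)%Z = 0.
  have : mod3 (H1 v) = mod3 (H2 v) by rewrite -gH1 -gH2.
  by move/eqP; rewrite mod3_inj_eq; lia.
have const_edge a b : e a b -> H1 a - H2 a = H1 b - H2 b.
  by move=> ab; have := m3 a; have := m3 b; have := e1 _ _ ab; have := e2 _ _ ab; lia.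
case: (pickP (fun _ : T => true)) => [r _|T0]; last by exists 0 => v; have := T0 v.
exists ((H1 r - H2 r) %/ 3)%Z => v.
have [k rv] := reach_ex econn r v.
suff : H1 r - H2 r = H1 v - H2 v by have := m3 r; lia.
elim: k v rv => [|k IH] v /=; first by move=> /eqP ->.
by move=> /orP [/IH //|/existsP [w /andP [rw wv]]]; rewrite (IH _ rw) (const_edge _ _ wv).
Qed.

Lemma walk_height_bound k f g hf hg : walk e k f g -> height f hf -> height g hg ->
  exists c, (forall v, ((hg v + 3 * c - hf v) %% 2)%Z = 0) /\
            \sum_v `|hg v + 3 * c - hf v| <= 2 * k%:Z.
Proof.
move=> w fhf ghg; have [H [gH s p]] := height_walk w fhf.
have [c Hc] := height_uniq gH ghg.
exists c; split; first by move=> v; have := p v; rewrite Hc.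
by under eq_bigr => v _ do rewrite -Hc.
Qed.

End HeightFunctions.

Definition clamp (x : int) : int := if x < -1 then -1 else if 4 < x then 4 else x.

Lemma clamp_bound x : -1 <= clamp x <= 4.
Proof. by rewrite /clamp; repeat case: ifP; lia. Qed.

Lemma clamp_step x y : 0 <= y - x <= 1 -> 0 <= clamp y - clamp x <= 1.
Proof. by rewrite /clamp; repeat case: ifP; lia. Qed.

Lemma clamp_low x : x <= -1 -> clamp x = -1.
Proof. by rewrite /clamp; repeat case: ifP; lia. Qed.

Lemma divz_step (M a b : int) : 0 < M -> 0 <= b - a < M -> 0 <= (b %/ M)%Z - (a %/ M)%Z <= 1.
Proof.
move=> M0 ab; have := divz_eq a M; have := divz_eq b M.
by have := modz_ge0 a (lt0r_neq0 M0); nia.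
Qed.

Lemma discrete_ivt (F : nat -> int) t1 : F 0%N <= 1 -> -1 <= F t1 ->
  (forall t, (t < t1)%N -> 0 <= F t.+1 - F t <= 2) -> exists t, (t <= t1)%N /\ -1 <= F t <= 1.
Proof.
elim: t1 F => [|t1 IH] F F0 Ft1 step; first by exists 0%N; split => //; lia.
have [F0m1|] := boolP (-1 <= F 0%N); first by exists 0%N; split => //; lia.
have := step 0%N isT => step0 F0lt.
have [t [tt1 Ft]] := IH (fun t => F t.+1) ltac:(lia) Ft1 (fun t ht => step t.+1 ht).
by exists t.+1.
Qed.

(* With rho the distance to r, g has height -rho and f has height
   -rho + 2 shift_N, where shift_N moves from the constant -1 (at N = Nlow)
   to rho - 1 clamped to [-1, 4] (at N = 0), one vertex at a time in order
   of increasing rho.  A walk from f to g is at least as long as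
   \sum_v |shift_N v - 3j| for some integer j, hence as the smaller of
   \sum_v |shift_N v| and \sum_v |shift_N v - 3|, whose sum is >= 3n + 2;
   the discrete intermediate value theorem picks N making them nearly equal. *)
Section FarColorings.
Variables (T : finType) (e : rel T).
Hypothesis esym : forall x y, e x y = e y x.
Hypothesis eirr : forall x, ~~ e x x.
Hypothesis econn : forall x y, connect e x y.
Hypothesis ecount : (#|edge_set e| = #|T| - 1)%N.
Hypothesis neighbor : forall v, exists w, e v w.
Variable r : T.

Let rho v : int := (dist econn r v)%:Z.
Let Dsum : nat := \sum_v dist econn r v.
Let nn : int := #|T|%:Z.
Let key v : int := rho v * nn + (enum_rank v : nat)%:Z + 1.
Let period : int := nn * (Dsum%:Z + 1) + 1.
Let level (N : int) v : int := rho v + ((N - key v) %/ period)%Z.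
Let shift (N : int) v : int := clamp (level N v).
Let hg v : int := - rho v.
Let hf (N : int) v : int := - rho v + 2 * shift N v.

Lemma rho_bound (v : T) : 0 <= rho v <= Dsum%:Z.
Proof. by rewrite /rho /Dsum (bigD1 v) //=; lia. Qed.

Lemma rank_bound (v : T) : 0 <= (enum_rank v : nat)%:Z < nn.
Proof. by have : (enum_rank v < #|T|)%N := ltn_ord (enum_rank v); rewrite /nn; lia. Qed.

Lemma key_bound (v : T) : 1 <= key v < period.
Proof. by have := rho_bound v; have := rank_bound v; rewrite /key /period; nia. Qed.

Lemma key_mono (a b : T) : rho a < rho b -> key a < key b.
Proof. by have := rank_bound a; have := rank_bound b; rewrite /key; nia. Qed.

Lemma key_inj (a b : T) : key a = key b -> a = b.
Proof.
move=> kab; have rab : rho a = rho b.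
  by case: (ltrgtP (rho a) (rho b)) => // /key_mono; rewrite kab ltxx.
have : (enum_rank a : nat) = enum_rank b by move: kab; rewrite /key rab; lia.
by move/val_inj/enum_rank_inj.
Qed.

Lemma rho_edge a b : e a b -> rho b = rho a + 1 \/ rho a = rho b + 1.
Proof. by move=> ab; have := dist_edge esym econn ecount r ab; rewrite /rho; lia. Qed.

Lemma shift_edge (N : int) (a b : T) : rho b = rho a + 1 -> 0 <= shift N b - shift N a <= 1.
Proof.
move=> rab; apply: clamp_step; have := key_mono (a := a) (b := b) ltac:(lia).
have := key_bound a; have := key_bound b => kb ka kab.
have := divz_step (M := period) (a := N - key b) (b := N - key a) ltac:(lia) ltac:(lia).
by rewrite /level; lia.
Qed.

Definition col_g := [ffun v => mod3 (hg v)].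
Definition col_f (N : int) := [ffun v => mod3 (hf N v)].

Lemma height_g : height e col_g hg.
Proof. by split=> [v|a b ab]; [rewrite ffunE | have := rho_edge ab; rewrite /hg; lia]. Qed.

Lemma height_f (N : int) : height e (col_f N) (hf N).
Proof.
split=> [v|a b ab]; first by rewrite ffunE.
by case: (rho_edge ab) => rab; have := shift_edge N rab; rewrite /hf; lia.
Qed.

Definition balance (N : int) := \sum_v (`|shift N v| - `|shift N v - 3|).

Lemma walk_f_g_long (N : int) k : walk e k (col_f N) col_g ->
  shift N r = -1 -> -1 <= balance N <= 1 -> ((3 * #|T|)./2 < k)%N.
Proof.
move=> w shift_r bal.
have [c [par sum_le]] := walk_height_bound esym eirr neighbor econn w (height_f N) height_g.
have c2 : (c %% 2)%Z = 0 by have := par r; rewrite /hg /hf shift_r; lia.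
pose j := (c %/ 2)%Z.
have term v : `|hg v + 3 * c - hf N v| = 2 * `|shift N v - 3 * j|.
  by rewrite /hg /hf /j; lia.
have sum_j : \sum_v `|shift N v - 3 * j| <= k%:Z.
  move: sum_le; under eq_bigr => v _ do rewrite term.
  by rewrite -mulr_sumr ler_pM2l.
have shift_bnd v : -1 <= shift N v <= 4 by apply: clamp_bound.
have sum_ge : 3 * nn + 2 <= \sum_v `|shift N v| + \sum_v `|shift N v - 3|.
  rewrite -big_split /=.
  apply: le_trans (_ : \sum_v (3 + (if v == r then 2 else 0)) <= _).
    rewrite big_split /= sumr_const (bigD1 r) //= eqxx big1 => [|v /negbTE ->//].
    by rewrite /nn -mulr_natr natz (_ : #|xpredT| = #|T|) //; lia.
  apply: ler_sum => v _; have := shift_bnd v.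
  by case: (eqVneq v r) => [->|_]; rewrite ?shift_r; lia.
have bal_eq : balance N = \sum_v `|shift N v| - \sum_v `|shift N v - 3| by rewrite /balance sumrB.
have sum_j_ge : \sum_v `|shift N v| <= \sum_v `|shift N v - 3 * j| \/
                \sum_v `|shift N v - 3| <= \sum_v `|shift N v - 3 * j|.
  by case: (lerP j 0) => j0; [left|right]; apply: ler_sum => v _; have := shift_bnd v; lia.
suff : ((3 * #|T|)./2 + 1)%N%:Z <= k%:Z by lia.
by move: bal; rewrite bal_eq; move: sum_ge sum_j_ge sum_j; rewrite /nn; lia.
Qed.

Lemma shift_root N : N <= 0 -> shift N r = -1.
Proof.
move=> N0; apply: clamp_low; have := key_bound r; have := rho_bound r.
by rewrite /level /rho distxx; nia.
Qed.

Let Nlow : int := - (period * (Dsum%:Z + 2)).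

Lemma shift_Nlow v : shift Nlow v = -1.
Proof.
by apply: clamp_low; have := key_bound v; have := rho_bound v; rewrite /level /Nlow; nia.
Qed.

Lemma level_succ N v : 0 <= level (N + 1) v - level N v <= 1.
Proof.
have := key_bound v => kv.
have := divz_step (M := period) (a := N - key v) (b := N + 1 - key v) ltac:(lia) ltac:(lia).
by rewrite /level; lia.
Qed.

Lemma level_succ_eq N v : ((N + 1 - key v) %% period)%Z != 0 -> level (N + 1) v = level N v.
Proof.
have := key_bound v => kv mv; rewrite /level.
have := divz_eq (N - key v) period; have := divz_eq (N + 1 - key v) period.
by have := modz_ge0 (N - key v) (lt0r_neq0 (_ : 0 < period)); move: mv; nia.
Qed.

Lemma key_mod_uniq N a b :
  ((N + 1 - key a) %% period)%Z = 0 -> ((N + 1 - key b) %% period)%Z = 0 -> a = b.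
Proof.
move=> ma mb; apply: key_inj; have := key_bound a; have := key_bound b.
have := divz_eq (N + 1 - key a) period; have := divz_eq (N + 1 - key b) period.
rewrite ma mb !addr0; set qa := ((N + 1 - key a) %/ period)%Z.
set qb := ((N + 1 - key b) %/ period)%Z => Eb Ea kb ka.
have q_ab : (qb - qa) * period = key a - key b by lia.
by case: (ltrgtP (qb - qa) 0) => qs; nia.
Qed.

Lemma balance_succ N : 0 <= balance (N + 1) - balance N <= 2.
Proof.
rewrite /balance -sumrB.
have step v : 0 <= (`|shift (N + 1) v| - `|shift (N + 1) v - 3|)
                   - (`|shift N v| - `|shift N v - 3|) <= 2.
  have := clamp_step (level_succ N v).
  by have := clamp_bound (level (N + 1) v); have := clamp_bound (level N v); rewrite /shift; lia.
have still v : ((N + 1 - key v) %% period)%Z != 0 ->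
    (`|shift (N + 1) v| - `|shift (N + 1) v - 3|) - (`|shift N v| - `|shift N v - 3|) = 0.
  by move=> mv; rewrite /shift level_succ_eq // subrr.
case: (pickP (fun v => ((N + 1 - key v) %% period)%Z == 0)) => [v0 /eqP m0|none].
  rewrite (bigD1 v0) //= big1 => [|v nv]; first by rewrite addr0; apply: step.
  by apply: still; apply: contra nv => /eqP mv; apply/eqP; exact: key_mod_uniq mv m0.
by rewrite big1 // => v _; apply: still; rewrite none.
Qed.

Lemma balanced_shift : -1 <= balance 0 -> exists N, N <= 0 /\ -1 <= balance N <= 1.
Proof.
move=> bal0.
have Nlow0 : Nlow <= 0 by have := key_bound r; have := rho_bound r; rewrite /Nlow; nia.
pose F t := balance (Nlow + t%:Z).
have F0 : F 0%N <= 1.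
  rewrite /F addr0 /balance; under eq_bigr => v _ do rewrite shift_Nlow.
  by rewrite sumr_const -mulr_natr natz; lia.
have F1 : -1 <= F (absz Nlow) by rewrite /F (_ : Nlow + (absz Nlow)%:Z = 0) //; lia.
have Fstep t : (t < absz Nlow)%N -> 0 <= F t.+1 - F t <= 2.
  move=> _; have := balance_succ (Nlow + t%:Z); rewrite /F.
  by rewrite (_ : Nlow + t.+1%:Z = Nlow + t%:Z + 1) //; lia.
have [t [tN Ft]] := discrete_ivt F0 F1 Fstep.
by exists (Nlow + t%:Z); split => //; lia.
Qed.

Lemma balance0 : balance 0 = 3 * nn - 2 * (ball_weight econn r)%:Z.
Proof.
have term v : `|shift 0 v| - `|shift 0 v - 3| =
    3 - 2 * ((dist econn r v <= 1) + (dist econn r v <= 2) + (dist econn r v <= 3))%N%:Z.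
  have level0 : level 0 v = rho v - 1 by have := key_bound v; rewrite /level; nia.
  rewrite /shift level0 /rho; case: (dist econn r v) => [|[|[|[|d]]]]; rewrite /clamp //=.
  by case: ifP => _; lia.
rewrite /balance; under eq_bigr => v _ do rewrite term.
rewrite sumrB sumr_const -mulr_sumr /ball_weight.
rewrite (big_morph Posz PoszD (erefl _)) /nn (_ : #|xpredT| = #|T|) //.
have -> // : (3 : int) *+ #|T| = 3 * #|T|%:Z.
by elim: #|T| => // m IH; rewrite mulrS IH; lia.
Qed.

Lemma far_colorings : light econn r ->
  exists f g, [/\ proper3 e f, proper3 e g & forall k, walk e k f g -> ((3 * #|T|)./2 < k)%N].
Proof.
move=> light; have [N [N0 bal]] : exists N, N <= 0 /\ -1 <= balance N <= 1.
  by apply: balanced_shift; move: light; rewrite balance0 /light /nn; lia.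
exists (col_f N), col_g; split; [exact: height_proper (height_f N)|exact: height_proper height_g|].
by move=> k w; exact: walk_f_g_long w (shift_root N0) bal.
Qed.

End FarColorings.

Local Close Scope ring_scope.

Theorem mainTheorem16 (n : nat) (T : finType) (e : rel T) :
  7 <= n -> #|T| = n -> is_tree e ->
  col_diam_eq e ((3 * n)./2) ->
  is_star e \/
  exists a b, [/\ 1 <= a, 1 <= b, a + b + 2 = n,
                  a <= b + 4 & b <= a + 4] /\ is_double_star e a b.
Proof.
move=> T_ge7 T_n [[eirr esym] [econn ecount]] [diam _]; subst n.
have neighbor := has_neighbor esym econn (ltac:(lia) : 1 < #|T|).
have heavy r : ~~ light econn r.
  apply/negP => /(far_colorings esym eirr ecount neighbor) [f [g [pf pg far]]].
  by have [j j_le w] := diam f g pf pg; have := far _ w; lia.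
have [/existsP [u /existsP [v uv4]] | /existsPn diam3] :=
  boolP [exists u, exists v, 3 < dist econn u v].
  have [x [y [lx ly uvxy]]] := diametral_leaves esym econn ecount u v.
  have [r lr] := light_of_dist4 esym eirr ecount T_ge7 lx ly (leq_trans uv4 uvxy).
  by move: (heavy r); rewrite lr.
have {}diam3 u v : dist econn u v <= 3 by move/existsPn: (diam3 u) => /(_ v); rewrite -leqNgt.
have [/existsP [u /existsP [v /eqP uv3]] | /existsPn diam2] :=
  boolP [exists u, exists v, dist econn u v == 3].
  by right; apply: balanced_double_star_of_diam3 heavy uv3 diam3.
left; apply: (star_of_dist_le2 esym eirr ecount (ltac:(lia) : 1 < #|T|)) => u v.
by move/existsPn: (diam2 u) => /(_ v); have := diam3 u v; lia.
Qed.
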